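(* Let $n \ge 1$, let $Q \ge 0$, and let $q_1,\dots,q_n \in [0,Q]$ be demands. Let $d_{i,i+1}$ ($1 \le i \le n-1$), $d_{0,i}$ and $d_{i,0}$ ($1 \le i \le n$) be real numbers. For $1 \le i \le n$ put $D[i] = \sum_{k=1}^{i-1} d_{k,k+1}$ and $Q[i] = \sum_{k=1}^{i} q_k$, with $Q[0]=0$. Let $\mathcal{G}=(\mathcal{V},\mathcal{A})$ be the directed acyclic graph with $\mathcal{V}=\{0,1,\dots,n\}$ and with an arc $(i,j)$, for $0 \le i<j\le n$, if and only if $Q[j]-Q[i] \le Q$; the arc $(i,j)$ has cost $c(i,j) = d_{0,i+1} + D[j] - D[i+1] + d_{j,0}$. Then there is an algorithm that computes a minimum-cost path from $0$ to $n$ in $\mathcal{G}$ (together with its cost) in $\mathcal{O}(n)$ time.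
   Context: This is the ''Split'' problem of route-first cluster-second heuristics for the capacitated vehicle routing problem: customers $1,\dots,n$ are given in a fixed order (a ''giant tour''), $d_{0,i}$ and $d_{i,0}$ are the distances from the depot to customer $i$ and back, $d_{i,i+1}$ is the distance between consecutive customers, and an arc $(i,j)$ represents a route leaving the depot, visiting customers $i+1,\dots,j$ in order and returning to the depot, which is allowed only if its total demand is at most the vehicle capacity $Q$. A path from $0$ to $n$ thus corresponds to a partition of the giant tour into consecutive feasible routes, and its cost is the total routing cost. Running time is measured in the model where arithmetic operations and comparisons on reals take constant time. *)

From Stdlib Require Import Reals Arith List Lia.
Open Scope R_scope.

(* Inputs are functions on nat; only indices in the ranges of the      *)
(* paper are ever used:                                                *)
(*   q i      = q_i          (1 <= i <= n)                             *)
(*   d0 i     = d_{0,i}      (1 <= i <= n)                             *)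
(*   dback i  = d_{i,0}      (1 <= i <= n)                             *)
(*   dnext i  = d_{i,i+1}    (1 <= i <= n-1)                           *)

Fixpoint psum (f : nat -> R) (m : nat) : R :=
  match m with
  | O => 0
  | S m' => psum f m' + f m
  end.

Definition Qcum (q : nat -> R) (i : nat) : R := psum q i.

Definition Dcum (dnext : nat -> R) (i : nat) : R := psum dnext (i - 1).

Definition arc (n : nat) (Qcap : R) (q : nat -> R) (i j : nat) : Prop :=
  (i < j)%nat /\ (j <= n)%nat /\ Qcum q j - Qcum q i <= Qcap.

Definition arc_cost (d0 dback dnext : nat -> R) (i j : nat) : R :=
  d0 (i + 1)%nat + Dcum dnext j - Dcum dnext (i + 1)%nat + dback j.

Fixpoint valid_from (n : nat) (Qcap : R) (q : nat -> R) (i : nat) (l : list nat)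
  : Prop :=
  match l with
  | nil => i = n
  | j :: l' => arc n Qcap q i j /\ valid_from n Qcap q j l'
  end.

Fixpoint cost_from (d0 dback dnext : nat -> R) (i : nat) (l : list nat) : R :=
  match l with
  | nil => 0
  | j :: l' => arc_cost d0 dback dnext i j + cost_from d0 dback dnext j l'
  end.

Definition is_min_cost_path (n : nat) (Qcap : R) (q d0 dback dnext : nat -> R)
  (p : list nat) (c : R) : Prop :=
  exists l, p = 0%nat :: l /\ valid_from n Qcap q 0 l /\
    cost_from d0 dback dnext 0 l = c /\
    forall l', valid_from n Qcap q 0 l' -> c <= cost_from d0 dback dnext 0 l'.

(* Computational model: a unit-cost real RAM.                          *)
(* Each memory write, each conditional test and each loop test costs   *)
(* one unit (expressions inside a fixed program have bounded size, so  *)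
(* evaluating them is constant time).  Arithmetic: +,- (truncated) and *)
(* comparisons on naturals; +,-,* and comparisons on reals.  No        *)
(* real->nat conversion (no floor), no multiplication on naturals.     *)

Inductive val : Type := VN (k : nat) | VR (r : R).

Definition mem := nat -> val.

Inductive binop : Type := OAdd | OSub | OMul | OLt | OLe | OEq.

Definition b2v (b : bool) : val := if b then VN 1 else VN 0.

Definition eval_binop (o : binop) (v1 v2 : val) : option val :=
  match o, v1, v2 with
  | OAdd, VN a, VN b => Some (VN (a + b))
  | OAdd, VR a, VR b => Some (VR (a + b))
  | OSub, VN a, VN b => Some (VN (a - b))
  | OSub, VR a, VR b => Some (VR (a - b))
  | OMul, VR a, VR b => Some (VR (a * b))
  | OLt, VN a, VN b => Some (b2v (Nat.ltb a b))
  | OLt, VR a, VR b => Some (b2v (if Rlt_dec a b then true else false))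
  | OLe, VN a, VN b => Some (b2v (Nat.leb a b))
  | OLe, VR a, VR b => Some (b2v (if Rle_dec a b then true else false))
  | OEq, VN a, VN b => Some (b2v (Nat.eqb a b))
  | OEq, VR a, VR b => Some (b2v (if Req_EM_T a b then true else false))
  | _, _, _ => None
  end.

Inductive expr : Type :=
  | ENat (k : nat)
  | EReal (r : R)
  | ELoad (a : expr)
  | EBin (o : binop) (e1 e2 : expr).

Fixpoint eval (m : mem) (e : expr) : option val :=
  match e with
  | ENat k => Some (VN k)
  | EReal r => Some (VR r)
  | ELoad a => match eval m a with Some (VN x) => Some (m x) | _ => None end
  | EBin o e1 e2 =>
      match eval m e1, eval m e2 with
      | Some v1, Some v2 => eval_binop o v1 v2
      | _, _ => None
      end
  end.

Inductive stmt : Type :=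
  | SSkip
  | SStore (a e : expr)
  | SSeq (s1 s2 : stmt)
  | SIf (b : expr) (s1 s2 : stmt)
  | SWhile (b : expr) (s : stmt).

Definition upd (m : mem) (x : nat) (v : val) : mem :=
  fun y => if Nat.eqb y x then v else m y.

Inductive exec : stmt -> mem -> nat -> mem -> Prop :=
  | ExSkip m : exec SSkip m 0 m
  | ExStore a e m x v :
      eval m a = Some (VN x) -> eval m e = Some v ->
      exec (SStore a e) m 1 (upd m x v)
  | ExSeq s1 s2 m t1 m1 t2 m2 :
      exec s1 m t1 m1 -> exec s2 m1 t2 m2 -> exec (SSeq s1 s2) m (t1 + t2) m2
  | ExIfT b s1 s2 m k t m' :
      eval m b = Some (VN (S k)) -> exec s1 m t m' -> exec (SIf b s1 s2) m (S t) m'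
  | ExIfF b s1 s2 m t m' :
      eval m b = Some (VN 0) -> exec s2 m t m' -> exec (SIf b s1 s2) m (S t) m'
  | ExWhileF b s m :
      eval m b = Some (VN 0) -> exec (SWhile b s) m 1 m
  | ExWhileT b s m k t1 m1 t2 m2 :
      eval m b = Some (VN (S k)) -> exec s m t1 m1 ->
      exec (SWhile b s) m1 t2 m2 -> exec (SWhile b s) m (S (t1 + t2)) m2.

(* Input layout:
     mem[0] = n, mem[1] = Q,
     for 1 <= i <= n:  mem[4i] = q_i, mem[4i+1] = d_{0,i},
                       mem[4i+2] = d_{i,0},
                       mem[4i+3] = d_{i,i+1} (if i < n),
     all other cells hold the natural number 0. *)
Definition input_mem (n : nat) (Qcap : R) (q d0 dback dnext : nat -> R) : mem :=
  fun a =>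
    if Nat.eqb a 0 then VN n
    else if Nat.eqb a 1 then VR Qcap
    else
      let i := (a / 4)%nat in
      if andb (Nat.leb 1 i) (Nat.leb i n) then
        match (a mod 4)%nat with
        | 0%nat => VR (q i)
        | 1%nat => VR (d0 i)
        | 2%nat => VR (dback i)
        | _ => if Nat.ltb i n then VR (dnext i) else VN 0
        end
      else VN 0.

Fixpoint read_nats (m : mem) (base k : nat) : option (list nat) :=
  match k with
  | O => Some nil
  | S k' =>
      match m base, read_nats m (S base) k' with
      | VN x, Some l => Some (x :: l)
      | _, _ => None
      end
  end.

(* Output layout: mem[0] = cost (a real), mem[1] = k (number of vertices
   of the path), mem[2..k+1] = the vertices of the path, in order. *)

(** Vidal's linear-time Split.  Since [c(i,j) = (d_{0,i+1} - D[i+1]) + (D[j] + d_{j,0})],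
    the best predecessor of [j] minimises the label [P[i] + d_{0,i+1} - D[i+1]] over the
    predecessors [i] with [Q[j] - Q[i] <= Q].  These form a suffix of [0..j-1] that only
    moves right as [j] grows, so the candidates are kept in a deque with increasing
    indices and increasing labels: infeasible ones leave at the front, and a new index
    [j] evicts from the back every candidate whose label is not smaller than its own,
    since [j] stays feasible at least as long as they do.  Each index enters and leaves
    the deque once, which gives linear time; the path is read back through the array
    of chosen predecessors. *)

From Stdlib Require Import Reals Arith List Lia Lra FunctionalExtensionality.
Open Scope R_scope.

Lemma upd_eq (m : mem) x y v : y = x -> upd m x v y = v.
Proof. intros ->. unfold upd. now rewrite Nat.eqb_refl. Qed.

Lemma upd_neq (m : mem) x y v : y <> x -> upd m x v y = m y.
Proof. intros H. unfold upd. now rewrite (proj2 (Nat.eqb_neq y x) H). Qed.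

Lemma upd_shadow (m : mem) x a b : upd (upd m x a) x b = upd m x b.
Proof. apply functional_extensionality; intro y. unfold upd. now destruct (Nat.eqb y x). Qed.

Lemma upd_same (m : mem) x : upd m x (m x) = m.
Proof.
  apply functional_extensionality; intro y. unfold upd.
  destruct (Nat.eqb_spec y x); congruence.
Qed.

Lemma upd_shadow2 (m : mem) a b u v w z :
  a <> b -> upd (upd (upd (upd m a u) b v) a w) b z = upd (upd m a w) b z.
Proof.
  intros H. apply functional_extensionality; intro y. unfold upd.
  destruct (Nat.eqb_spec y b), (Nat.eqb_spec y a); auto.
Qed.

Lemma read_nats_nth (m : mem) b l :
  (forall s, (s < length l)%nat -> m (b + s)%nat = VN (nth s l 0%nat)) ->
  read_nats m b (length l) = Some l.
Proof.
  revert b; induction l as [|a l IH]; intros b H; [reflexivity|].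
  simpl. rewrite IH.
  - specialize (H 0%nat ltac:(simpl; lia)). rewrite Nat.add_0_r in H. now rewrite H.
  - intros s Hs. specialize (H (S s) ltac:(simpl; lia)).
    now replace (S b + s)%nat with (b + S s)%nat by lia.
Qed.

Section Evaluation.
Variable m : mem.

Lemma eval_load e x v : eval m e = Some (VN x) -> m x = v -> eval m (ELoad e) = Some v.
Proof. intros H1 H2. simpl. now rewrite H1, H2. Qed.

Lemma eval_bin o e1 e2 v1 v2 :
  eval m e1 = Some v1 -> eval m e2 = Some v2 -> eval m (EBin o e1 e2) = eval_binop o v1 v2.
Proof. intros H1 H2. simpl. now rewrite H1, H2. Qed.

Lemma eval_addN e1 e2 a b c : eval m e1 = Some (VN a) -> eval m e2 = Some (VN b) ->
  (a + b)%nat = c -> eval m (EBin OAdd e1 e2) = Some (VN c).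
Proof. intros H1 H2 <-. now rewrite (eval_bin _ _ _ _ _ H1 H2). Qed.

Lemma eval_subN e1 e2 a b c : eval m e1 = Some (VN a) -> eval m e2 = Some (VN b) ->
  (a - b)%nat = c -> eval m (EBin OSub e1 e2) = Some (VN c).
Proof. intros H1 H2 <-. now rewrite (eval_bin _ _ _ _ _ H1 H2). Qed.

Lemma eval_addR e1 e2 a b c : eval m e1 = Some (VR a) -> eval m e2 = Some (VR b) ->
  a + b = c -> eval m (EBin OAdd e1 e2) = Some (VR c).
Proof. intros H1 H2 <-. now rewrite (eval_bin _ _ _ _ _ H1 H2). Qed.

Lemma eval_subR e1 e2 a b c : eval m e1 = Some (VR a) -> eval m e2 = Some (VR b) ->
  a - b = c -> eval m (EBin OSub e1 e2) = Some (VR c).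
Proof. intros H1 H2 <-. now rewrite (eval_bin _ _ _ _ _ H1 H2). Qed.

Lemma eval_ltN e1 e2 a b : eval m e1 = Some (VN a) -> eval m e2 = Some (VN b) ->
  eval m (EBin OLt e1 e2) = Some (b2v (Nat.ltb a b)).
Proof. intros H1 H2. now rewrite (eval_bin _ _ _ _ _ H1 H2). Qed.

Lemma eval_ltR e1 e2 a b : eval m e1 = Some (VR a) -> eval m e2 = Some (VR b) ->
  eval m (EBin OLt e1 e2) = Some (b2v (if Rlt_dec a b then true else false)).
Proof. intros H1 H2. now rewrite (eval_bin _ _ _ _ _ H1 H2). Qed.

Lemma eval_leR e1 e2 a b : eval m e1 = Some (VR a) -> eval m e2 = Some (VR b) ->
  eval m (EBin OLe e1 e2) = Some (b2v (if Rle_dec a b then true else false)).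
Proof. intros H1 H2. now rewrite (eval_bin _ _ _ _ _ H1 H2). Qed.

End Evaluation.

Definition set_at {A : Type} (f : nat -> A) (j : nat) (v : A) : nat -> A :=
  fun k => if Nat.eqb k j then v else f k.

Fixpoint pred_chain_fuel (pr : nat -> nat) (f x : nat) : list nat :=
  match f with
  | O => x :: nil
  | S f' => if Nat.eqb x 0 then 0%nat :: nil else pred_chain_fuel pr f' (pr x) ++ x :: nil
  end.

Section SplitGraph.
Variables (n : nat) (Qcap : R) (q d0 dback dnext : nat -> R).
Hypothesis q_bounds : forall i, (1 <= i <= n)%nat -> 0 <= q i <= Qcap.

Local Notation arc := (arc n Qcap q).
Local Notation cost := (cost_from d0 dback dnext).
Local Notation arc_cost := (arc_cost d0 dback dnext).

Fixpoint path_to (t i : nat) (l : list nat) : Prop :=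
  match l with
  | nil => i = t
  | j :: l' => arc i j /\ path_to t j l'
  end.

Lemma valid_from_path_to i l : valid_from n Qcap q i l <-> path_to n i l.
Proof. revert i; induction l as [|j l IH]; simpl; intros i; [tauto | now rewrite IH]. Qed.

Lemma path_to_le t i l : path_to t i l -> (i <= t)%nat.
Proof.
  revert i; induction l as [|j l IH]; simpl; intros i H; [lia|].
  destruct H as [[Hij _] Hl]. apply IH in Hl. lia.
Qed.

Lemma path_to_self t l : path_to t t l -> l = nil.
Proof. destruct l as [|j l]; simpl; auto. intros [[Htj _] Hl]. apply path_to_le in Hl. lia. Qed.

Lemma path_to_snoc t i l x : path_to t i l -> arc t x -> path_to x i (l ++ x :: nil).
Proof.
  revert i; induction l as [|j l IH]; simpl; intros i H Hx; [now subst|].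
  destruct H as [Hij Hl]. auto.
Qed.

Lemma cost_from_snoc t i l x :
  path_to t i l -> cost i (l ++ x :: nil) = cost i l + arc_cost t x.
Proof.
  revert i; induction l as [|j l IH]; simpl; intros i H; [subst; lra|].
  destruct H as [_ Hl]. rewrite (IH j Hl). lra.
Qed.

Lemma path_to_last_arc t s l : path_to t s l -> l <> nil ->
  exists i l0, path_to i s l0 /\ arc i t /\ cost s l = cost s l0 + arc_cost i t.
Proof.
  revert s; induction l as [|a l IH]; intros s H Hne; [congruence|].
  destruct l as [|b l'].
  - simpl in H. destruct H as [Hsa ->]. exists s, nil. simpl.
    split; [reflexivity|]. split; [exact Hsa|]. lra.
  - destruct H as [Hsa Hl].
    destruct (IH a Hl ltac:(discriminate)) as [i [l0 [Hp [Hit Hc]]]].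
    exists i, (a :: l0). split; [split; assumption|]. split; [assumption|].
    change (arc_cost s a + cost a (b :: l') = arc_cost s a + cost a l0 + arc_cost i t).
    rewrite Hc. lra.
Qed.

Lemma below_all_arcs_optimal j c (pp : nat -> R) :
  (1 <= j)%nat ->
  (forall i l, (i < j)%nat -> path_to i 0 l -> pp i <= cost 0 l) ->
  (forall i, arc i j -> c <= pp i + arc_cost i j) ->
  forall l, path_to j 0 l -> c <= cost 0 l.
Proof.
  intros Hj Hopt Hc l Hl.
  destruct l as [|a l']; [simpl in Hl; lia|].
  destruct (path_to_last_arc j 0 (a :: l') Hl ltac:(discriminate))
    as [i [l0 [Hl0 [Hij Hcost]]]].
  rewrite Hcost. pose proof (Hc i Hij). pose proof (Hopt i l0 (proj1 Hij) Hl0). lra.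
Qed.

Lemma Qcum_mono i k : (i <= k <= n)%nat -> Qcum q i <= Qcum q k.
Proof.
  intros [Hik Hkn]. induction k as [|k IH].
  - replace i with 0%nat by lia. lra.
  - destruct (Nat.eq_dec i (S k)) as [->|Hne]; [lra|].
    unfold Qcum in *. simpl. pose proof (q_bounds (S k) ltac:(lia)).
    assert (psum q i <= psum q k) by (apply IH; lia). lra.
Qed.

Lemma Qcum_pred j : (1 <= j)%nat -> Qcum q (j - 1) + q j = Qcum q j.
Proof. intros H. destruct j; [lia|]. unfold Qcum. simpl. now rewrite Nat.sub_0_r. Qed.

Lemma Dcum_succ j : (1 <= j)%nat -> Dcum dnext j + dnext j = Dcum dnext (j + 1).
Proof.
  intros H. unfold Dcum. destruct j; [lia|].
  replace (S j + 1 - 1)%nat with (S j) by lia. simpl. now rewrite Nat.sub_0_r.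
Qed.

Definition label (pp : nat -> R) (i : nat) : R := pp i + d0 (i + 1)%nat - Dcum dnext (i + 1).

Lemma arc_cost_label pp i j :
  pp i + arc_cost i j = label pp i + Dcum dnext j + dback j.
Proof. unfold label, arc_cost. lra. Qed.

Lemma set_at_eq {A : Type} (f : nat -> A) j v : set_at f j v j = v.
Proof. unfold set_at. now rewrite Nat.eqb_refl. Qed.

Lemma set_at_neq {A : Type} (f : nat -> A) j v i : i <> j -> set_at f j v i = f i.
Proof. intros H. unfold set_at. now rewrite (proj2 (Nat.eqb_neq i j) H). Qed.

Lemma label_set_at pp j v i : i <> j -> label (set_at pp j v) i = label pp i.
Proof. intros H. unfold label. now rewrite set_at_neq. Qed.

Section Deque.
Variable w : nat -> R.

Definition deque_sorted (h tl : nat) (D : nat -> nat) : Prop :=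
  forall x y, (h <= x <= y)%nat -> (y < tl)%nat -> w (D x) <= w (D y).

Definition deque_covers (Qj : R) (j h tl : nat) (D : nat -> nat) : Prop :=
  forall i, (i < j)%nat -> (i < n)%nat -> Qj - Qcum q i <= Qcap ->
    exists x, (h <= x < tl)%nat /\ (i <= D x)%nat /\ w (D x) <= w i.

Definition back_scan (v : R) (h tl tl' : nat) (D : nat -> nat) : Prop :=
  (h <= tl' <= tl)%nat /\ (forall x, (tl' <= x < tl)%nat -> v <= w (D x)) /\
  ((h < tl')%nat -> w (D (tl' - 1)%nat) < v).

Lemma deque_head_min Qj j h tl D i :
  deque_sorted h tl D -> deque_covers Qj j h tl D ->
  (i < j)%nat -> (i < n)%nat -> Qj - Qcum q i <= Qcap -> w (D h) <= w i.
Proof.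
  intros Hsort Hcov Hij Hin Hfeas.
  destruct (Hcov i Hij Hin Hfeas) as [x [Hx [_ Hw]]].
  pose proof (Hsort h x ltac:(lia) ltac:(lia)). lra.
Qed.

End Deque.

Definition front_scan (Qj : R) (h h' tl : nat) (D : nat -> nat) : Prop :=
  (h <= h' < tl)%nat /\ (forall x, (h <= x < h')%nat -> Qcap < Qj - Qcum q (D x)) /\
  Qj - Qcum q (D h') <= Qcap.

(* A dropped entry is infeasible for the new load, and so is every predecessor it
   dominated, since [Qcum] is monotone. *)
Lemma deque_covers_front_scan w Qold Qj j h h' tl D :
  Qold <= Qj -> (forall x, (h <= x < tl)%nat -> (D x <= n)%nat) ->
  deque_covers w Qold j h tl D -> front_scan Qj h h' tl D ->
  deque_covers w Qj j h' tl D.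
Proof.
  intros HQ HDn Hcov [Hh' [Hdrop _]] i Hij Hin Hfeas.
  destruct (Hcov i Hij Hin ltac:(lra)) as [x [Hx [Hix Hw]]].
  exists x. repeat split; auto; try lia.
  destruct (Nat.lt_ge_cases x h') as [Hlt|]; [|lia].
  pose proof (Hdrop x ltac:(lia)).
  pose proof (Qcum_mono i (D x) ltac:(specialize (HDn x Hx); lia)). lra.
Qed.

Lemma deque_push w w' Qj j h tl tl' D :
  (forall x, (h <= x < tl)%nat -> (D x < j)%nat) -> (forall i, (i < j)%nat -> w' i = w i) ->
  deque_sorted w h tl D -> deque_covers w Qj j h tl D -> back_scan w (w' j) h tl tl' D ->
  let D' := set_at D tl' j in
  deque_sorted w' h (tl' + 1) D' /\ deque_covers w' Qj (j + 1) h (tl' + 1) D'.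
Proof.
  intros HDj Hw' Hsort Hcov [Htl' [Hevict Hkeep]] D'. unfold D', set_at. split.
  - intros x y Hxy Hy.
    destruct (Nat.eqb_spec y tl'), (Nat.eqb_spec x tl'); try lia; try lra.
    + rewrite Hw' by (apply HDj; lia).
      pose proof (Hsort x (tl' - 1)%nat ltac:(lia) ltac:(lia)).
      pose proof (Hkeep ltac:(lia)). lra.
    + rewrite !Hw' by (apply HDj; lia). apply Hsort; lia.
  - intros i Hi Hin Hfeas.
    destruct (Nat.eq_dec i j) as [->|Hij].
    { exists tl'. rewrite Nat.eqb_refl. repeat split; lia || lra. }
    destruct (Hcov i ltac:(lia) Hin Hfeas) as [x [Hx [Hix Hw]]].
    destruct (Nat.lt_ge_cases x tl').
    + exists x. rewrite (proj2 (Nat.eqb_neq x tl')) by lia.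
      rewrite !Hw' by (try apply HDj; lia). repeat split; auto; lia.
    + exists tl'. rewrite Nat.eqb_refl. rewrite (Hw' i) by lia.
      pose proof (Hevict x ltac:(lia)). repeat split; lia || lra.
Qed.

Definition pred_valid (j : nat) (pr : nat -> nat) (pp : nat -> R) : Prop :=
  forall i, (1 <= i < j)%nat ->
    (pr i < i)%nat /\ arc (pr i) i /\ pp i = pp (pr i) + arc_cost (pr i) i.

Definition pp_optimal (j : nat) (pp : nat -> R) : Prop :=
  forall i l, (i < j)%nat -> path_to i 0 l -> pp i <= cost 0 l.

Lemma pred_valid_set_at j pr pp p :
  pred_valid j pr pp -> (p < j)%nat -> arc p j ->
  pred_valid (j + 1) (set_at pr j p) (set_at pp j (pp p + arc_cost p j)).
Proof.
  intros Hval Hpj Harc i Hi. unfold set_at.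
  destruct (Nat.eqb_spec i j) as [->|Hij].
  - rewrite (proj2 (Nat.eqb_neq p j)) by lia. auto.
  - destruct (Hval i ltac:(lia)) as [Hlt [Hiarc Hpp]].
    rewrite (proj2 (Nat.eqb_neq (pr i) j)) by lia. auto.
Qed.

Lemma pp_optimal_set_at j pp c :
  (1 <= j)%nat -> pp_optimal j pp -> (forall i, arc i j -> c <= pp i + arc_cost i j) ->
  pp_optimal (j + 1) (set_at pp j c).
Proof.
  intros Hj Hopt Hc i l Hi Hl. unfold set_at.
  destruct (Nat.eqb_spec i j) as [->|Hij].
  - exact (below_all_arcs_optimal j c pp Hj Hopt Hc l Hl).
  - apply Hopt; auto. lia.
Qed.

Record split_state (j h tl : nat) (D pr : nat -> nat) (pp : nat -> R) : Prop := {
  st_j : (1 <= j <= n + 1)%nat;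
  st_window : (h <= tl <= j)%nat;
  st_deque_lt : forall x, (h <= x < tl)%nat -> (D x < j)%nat;
  st_sorted : deque_sorted (label pp) h tl D;
  st_covers : deque_covers (label pp) (Qcum q (j - 1)) j h tl D;
  st_pp0 : pp 0%nat = 0;
  st_pr0 : pr 0%nat = 0%nat;
  st_pred : pred_valid j pr pp;
  st_opt : pp_optimal j pp }.

Lemma split_state_init :
  (1 <= n)%nat -> split_state 1 0 1 (fun _ => 0%nat) (fun _ => 0%nat) (fun _ => 0).
Proof.
  intros Hn. split; try (intros; lia); try reflexivity.
  - intros x y Hxy Hy. lra.
  - intros i Hi Hin Hfeas. exists 0%nat. repeat split; try lia.
    replace i with 0%nat by lia. lra.
  - intros i Hi. lia.
  - intros i l Hi Hl. replace i with 0%nat in Hl by lia.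
    apply path_to_self in Hl. subst. simpl. lra.
Qed.

Lemma split_state_last_in_deque j h tl D pr pp :
  split_state j h tl D pr pp -> (j <= n)%nat ->
  exists x, (h <= x < tl)%nat /\ D x = (j - 1)%nat.
Proof.
  intros state Hjn. pose proof (st_j _ _ _ _ _ _ state).
  pose proof (q_bounds j ltac:(lia)).
  destruct (st_covers _ _ _ _ _ _ state (j - 1)%nat ltac:(lia) ltac:(lia) ltac:(lra))
    as [x [Hx [Hge _]]].
  pose proof (st_deque_lt _ _ _ _ _ _ state x Hx).
  exists x. split; [auto | lia].
Qed.

Section Step.
Variables (j h tl h' : nat) (D pr : nat -> nat) (pp : nat -> R).
Hypothesis state : split_state j h tl D pr pp.
Hypothesis j_le_n : (j <= n)%nat.
Hypothesis scan : front_scan (Qcum q j) h h' tl D.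

Let p := D h'.
Let pp' := set_at pp j (pp p + arc_cost p j).
Let pr' := set_at pr j p.

Lemma step_covers : deque_covers (label pp) (Qcum q j) j h' tl D.
Proof.
  pose proof (st_j _ _ _ _ _ _ state).
  apply (deque_covers_front_scan _ (Qcum q (j - 1)) _ _ h); auto.
  - apply Qcum_mono; lia.
  - intros x Hx. pose proof (st_deque_lt _ _ _ _ _ _ state x Hx). lia.
  - apply state.
Qed.

Lemma step_sorted : deque_sorted (label pp) h' tl D.
Proof. intros x y Hxy Hy. apply (st_sorted _ _ _ _ _ _ state); destruct scan; lia. Qed.

Lemma step_labels i : (i < j)%nat -> label pp' i = label pp i.
Proof. intros Hi. apply label_set_at. lia. Qed.

Lemma step_deque_lt x : (h' <= x < tl)%nat -> (D x < j)%nat.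
Proof. intros Hx. apply (st_deque_lt _ _ _ _ _ _ state). destruct scan; lia. Qed.

Lemma step_pred_opt : pred_valid (j + 1) pr' pp' /\ pp_optimal (j + 1) pp'.
Proof.
  pose proof (st_j _ _ _ _ _ _ state). destruct scan as [Hh' [_ Hfeas]].
  assert (Hp : (p < j)%nat) by (apply step_deque_lt; lia).
  assert (Harc : arc p j) by (repeat split; auto; lia).
  split.
  - apply pred_valid_set_at; auto. apply state.
  - apply pp_optimal_set_at; [lia | apply state |].
    intros i [Hij [_ Hifeas]]. rewrite !arc_cost_label.
    pose proof (deque_head_min _ _ _ _ _ _ i step_sorted step_covers Hij ltac:(lia) Hifeas).
    unfold p. lra.
Qed.

Lemma split_state_push tl' :
  (j < n)%nat -> back_scan (label pp) (label pp' j) h' tl tl' D ->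
  split_state (j + 1) h' (tl' + 1) (set_at D tl' j) pr' pp'.
Proof.
  intros Hjn Hback. pose proof (st_j _ _ _ _ _ _ state).
  destruct (deque_push (label pp) (label pp') (Qcum q j) j h' tl tl' D step_deque_lt
              step_labels step_sorted step_covers Hback) as [Hsort Hcov].
  destruct step_pred_opt as [Hpred Hopt]. destruct Hback as [Htl' _].
  split; auto.
  - lia.
  - pose proof (st_window _ _ _ _ _ _ state). lia.
  - intros x Hx. unfold set_at. destruct (Nat.eqb_spec x tl'); [lia|].
    pose proof (step_deque_lt x ltac:(lia)). lia.
  - now replace (j + 1 - 1)%nat with j by lia.
  - unfold pp', set_at. destruct (Nat.eqb_spec 0 j); [lia | apply state].
  - unfold pr', set_at. destruct (Nat.eqb_spec 0 j); [lia | apply state].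
Qed.

Lemma split_state_finish :
  j = n -> split_state (j + 1) h' tl D pr' pp'.
Proof.
  intros Hjn. pose proof (st_j _ _ _ _ _ _ state).
  destruct step_pred_opt as [Hpred Hopt]. destruct scan as [Hh' _].
  split; auto.
  - lia.
  - pose proof (st_window _ _ _ _ _ _ state). lia.
  - intros x Hx. pose proof (step_deque_lt x Hx). lia.
  - intros x y Hxy Hy. pose proof (step_deque_lt x ltac:(lia)).
    pose proof (step_deque_lt y ltac:(lia)). rewrite !step_labels by lia.
    apply step_sorted; lia.
  - intros i Hi Hin Hfeas. replace (j + 1 - 1)%nat with j in Hfeas by lia.
    destruct (step_covers i ltac:(lia) Hin Hfeas) as [x [Hx [Hix Hw]]].
    pose proof (step_deque_lt x Hx). exists x. rewrite !step_labels by lia. auto.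
  - unfold pp', set_at. destruct (Nat.eqb_spec 0 j); [lia | apply state].
  - unfold pr', set_at. destruct (Nat.eqb_spec 0 j); [lia | apply state].
Qed.

End Step.

Section PredChain.
Variable pr : nat -> nat.
Hypothesis pr_lt : forall i, (1 <= i <= n)%nat -> (pr i < i)%nat.

(* [pr] decreases strictly, so fuel [n] lets the chain of any [x <= n] reach [0]. *)
Definition pred_chain (x : nat) : list nat := pred_chain_fuel pr n x.

Lemma pred_chain_fuel_enough f x :
  (x <= f)%nat -> (x <= n)%nat -> pred_chain_fuel pr (S f) x = pred_chain_fuel pr f x.
Proof.
  revert x; induction f as [|f IH]; intros x Hx Hxn.
  - now replace x with 0%nat by lia.
  - simpl. destruct (Nat.eqb_spec x 0); [reflexivity|].
    pose proof (pr_lt x ltac:(lia)). simpl in IH. now rewrite IH by lia.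
Qed.

Lemma pred_chain_0 : (1 <= n)%nat -> pred_chain 0 = 0%nat :: nil.
Proof. intros Hn. unfold pred_chain. now replace n with (S (n - 1)) by lia. Qed.

Lemma pred_chain_step x : (1 <= x <= n)%nat -> pred_chain x = pred_chain (pr x) ++ x :: nil.
Proof.
  intros Hx. unfold pred_chain. pose proof (pr_lt x Hx).
  replace n with (S (n - 1)) at 1 by lia. simpl.
  destruct (Nat.eqb_spec x 0); [lia|]. f_equal.
  replace n with (S (n - 1)) at 2 by lia. symmetry. apply pred_chain_fuel_enough; lia.
Qed.

Lemma pred_chain_length x : (1 <= n)%nat -> (x <= n)%nat -> (length (pred_chain x) <= x + 1)%nat.
Proof.
  intros Hn. induction x as [x IH] using (well_founded_induction lt_wf). intros Hx.
  destruct (Nat.eq_dec x 0) as [->|Hx0]; [rewrite pred_chain_0 by auto; simpl; lia|].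
  rewrite pred_chain_step, length_app by lia. simpl.
  pose proof (pr_lt x ltac:(lia)). specialize (IH (pr x) ltac:(lia) ltac:(lia)). lia.
Qed.

End PredChain.

Lemma pred_chain_path pr pp x :
  (1 <= n)%nat -> pred_valid (n + 1) pr pp -> pp 0%nat = 0 -> (x <= n)%nat ->
  exists l, pred_chain pr x = 0%nat :: l /\ path_to x 0 l /\ cost 0 l = pp x.
Proof.
  intros Hn Hval Hpp0.
  assert (Hlt : forall i, (1 <= i <= n)%nat -> (pr i < i)%nat)
    by (intros i Hi; apply Hval; lia).
  induction x as [x IH] using (well_founded_induction lt_wf). intros Hx.
  destruct (Nat.eq_dec x 0) as [->|Hx0].
  - exists nil. rewrite pred_chain_0 by auto. simpl. auto.
  - destruct (Hval x ltac:(lia)) as [Hpx [Harc Hpp]].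
    destruct (IH (pr x) Hpx ltac:(lia)) as [l [Hchain [Hpath Hcost]]].
    exists (l ++ x :: nil). rewrite pred_chain_step, Hchain by (auto; lia).
    split; [reflexivity|]. split; [now apply (path_to_snoc (pr x))|].
    rewrite (cost_from_snoc (pr x)) by auto. lra.
Qed.

Lemma split_state_min_cost_path h tl D pr pp :
  (1 <= n)%nat -> split_state (n + 1) h tl D pr pp ->
  is_min_cost_path n Qcap q d0 dback dnext (pred_chain pr n) (pp n).
Proof.
  intros Hn state.
  destruct (pred_chain_path pr pp n Hn (st_pred _ _ _ _ _ _ state) (st_pp0 _ _ _ _ _ _ state)
              (Nat.le_refl n)) as [l [Hchain [Hpath Hcost]]].
  exists l. split; [exact Hchain|]. split; [now apply valid_from_path_to|]. split; [exact Hcost|].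
  intros l' Hl'. apply (st_opt _ _ _ _ _ _ state); [lia | now apply valid_from_path_to].
Qed.

End SplitGraph.

Definition e_add (e1 e2 : expr) : expr := EBin OAdd e1 e2.
Definition e_n : expr := ELoad (ENat 0).
(* The work area starts at [4n + 4], just past the input: slot [k] is cell [4n + 4 + k],
   and four arrays of [n + 1] cells follow ten slots. *)
Definition e_work : expr := e_add (e_add (e_add (e_add e_n e_n) e_n) e_n) (ENat 4).
Definition e_slot (k : nat) : expr := e_add e_work (ENat k).
Definition e_var (k : nat) : expr := ELoad (e_slot k).
Definition e_arrQ : expr := e_add e_work (ENat 10).
Definition e_arrLabel : expr := e_add e_arrQ (e_add e_n (ENat 1)).
Definition e_arrPred : expr := e_add e_arrLabel (e_add e_n (ENat 1)).
Definition e_arrDeque : expr := e_add e_arrPred (e_add e_n (ENat 1)).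
Definition e_at (a i : expr) : expr := ELoad (e_add a i).
Definition e_input (r : nat) (i : expr) : expr := e_add (e_add (e_add (e_add i i) i) i) (ENat r).
Definition e_field (r : nat) (i : expr) : expr := ELoad (e_input r i).

Notation v_j := 0%nat (only parsing).
Notation v_head := 1%nat (only parsing).
Notation v_tail := 2%nat (only parsing).
Notation v_Dj := 3%nat (only parsing).
Notation v_Qj := 4%nat (only parsing).
Notation v_P := 5%nat (only parsing).
Notation v_scan := 6%nat (only parsing).
Notation v_walk := 7%nat (only parsing).
Notation v_len := 8%nat (only parsing).
Notation v_pos := 9%nat (only parsing).

Definition drop_front : stmt :=
  SWhile (EBin OLt (ELoad (ENat 1))
            (EBin OSub (e_var v_Qj) (e_at e_arrQ (e_at e_arrDeque (e_var v_head)))))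
    (SStore (e_slot v_head) (e_add (e_var v_head) (ENat 1))).

(* Setting [scan] to [tail] is how the loop exits once the back entry is kept. *)
Definition pop_back : stmt :=
  SWhile (EBin OLt (e_var v_scan) (e_var v_tail))
    (SIf (EBin OLe (e_at e_arrLabel (e_var v_j))
                   (e_at e_arrLabel (e_at e_arrDeque (EBin OSub (e_var v_tail) (ENat 1)))))
       (SStore (e_slot v_tail) (EBin OSub (e_var v_tail) (ENat 1)))
       (SStore (e_slot v_scan) (e_var v_tail))).

Definition choose_pred : stmt :=
  SSeq (SStore (e_slot v_Qj) (EBin OAdd (e_var v_Qj) (e_field 0 (e_var v_j))))
 (SSeq (SStore (e_add e_arrQ (e_var v_j)) (e_var v_Qj))
 (SSeq drop_front
 (SSeq (SStore (e_slot v_P)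
          (EBin OAdd (EBin OAdd (e_at e_arrLabel (e_at e_arrDeque (e_var v_head))) (e_var v_Dj))
             (e_field 2 (e_var v_j))))
       (SStore (e_add e_arrPred (e_var v_j)) (e_at e_arrDeque (e_var v_head)))))).

Definition push_j : stmt :=
  SSeq (SStore (e_slot v_Dj) (EBin OAdd (e_var v_Dj) (e_field 3 (e_var v_j))))
 (SSeq (SStore (e_add e_arrLabel (e_var v_j))
          (EBin OSub (EBin OAdd (e_var v_P) (e_field 1 (e_add (e_var v_j) (ENat 1))))
             (e_var v_Dj)))
 (SSeq (SStore (e_slot v_scan) (e_var v_head))
 (SSeq pop_back
 (SSeq (SStore (e_add e_arrDeque (e_var v_tail)) (e_var v_j))
       (SStore (e_slot v_tail) (e_add (e_var v_tail) (ENat 1))))))).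

Definition advance : stmt :=
  SSeq (SIf (EBin OLt (e_var v_j) e_n) push_j SSkip)
       (SStore (e_slot v_j) (e_add (e_var v_j) (ENat 1))).

Definition split_body : stmt := SSeq choose_pred advance.

Definition split_loop : stmt := SWhile (EBin OLt (e_var v_j) (e_add e_n (ENat 1))) split_body.

Definition split_init : stmt :=
  SSeq (SStore (e_slot v_j) (ENat 1))
 (SSeq (SStore (e_slot v_tail) (ENat 1))
 (SSeq (SStore (e_slot v_Dj) (EReal 0))
 (SSeq (SStore (e_slot v_Qj) (EReal 0))
 (SSeq (SStore (e_add e_arrQ (ENat 0)) (EReal 0))
       (SStore (e_add e_arrLabel (ENat 0)) (e_field 1 (ENat 1))))))).

Definition count_chain : stmt :=
  SWhile (EBin OLt (ENat 0) (e_var v_walk))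
    (SSeq (SStore (e_slot v_walk) (e_at e_arrPred (e_var v_walk)))
          (SStore (e_slot v_len) (e_add (e_var v_len) (ENat 1)))).

Definition write_chain : stmt :=
  SWhile (EBin OLt (ENat 1) (e_var v_pos))
    (SSeq (SStore (e_var v_pos) (e_var v_walk))
    (SSeq (SStore (e_slot v_walk) (e_at e_arrPred (e_var v_walk)))
          (SStore (e_slot v_pos) (EBin OSub (e_var v_pos) (ENat 1))))).

Definition reconstruct : stmt :=
  SSeq (SStore (e_slot v_walk) e_n)
 (SSeq (SStore (e_slot v_len) (ENat 1))
 (SSeq count_chain
 (SSeq (SStore (e_slot v_walk) e_n)
 (SSeq (SStore (e_slot v_pos) (e_add (e_var v_len) (ENat 1)))
 (SSeq write_chain
 (SSeq (SStore (ENat 1) (e_var v_len))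
       (SStore (ENat 0) (e_var v_P)))))))).

Definition split_program : stmt := SSeq split_init (SSeq split_loop reconstruct).

Section Machine.
Variables (n : nat) (Qcap : R) (q d0 dback dnext : nat -> R).
Hypothesis n_pos : (1 <= n)%nat.
Hypothesis q_bounds : forall i, (1 <= i <= n)%nat -> 0 <= q i <= Qcap.

Local Notation W := (n + n + n + n + 4)%nat.
Local Notation aQ := (W + 10)%nat.
Local Notation aLabel := (W + 10 + (n + 1))%nat.
Local Notation aPred := (W + 10 + (n + 1) + (n + 1))%nat.
Local Notation aDeque := (W + 10 + (n + 1) + (n + 1) + (n + 1))%nat.
Local Notation input := (input_mem n Qcap q d0 dback dnext).
Local Notation label := (label d0 dnext).
Local Notation front_scan := (front_scan Qcap q).
Local Notation split_state := (split_state n Qcap q d0 dback dnext).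

Section Layout.
Variable m : mem.
Hypothesis m_n : m 0%nat = VN n.

Lemma eval_n : eval m e_n = Some (VN n).
Proof. simpl. now rewrite m_n. Qed.

Lemma eval_slot k : eval m (e_slot k) = Some (VN (W + k)).
Proof. unfold e_slot, e_work, e_add, e_n. simpl. now rewrite m_n. Qed.

Lemma eval_var k v : m (W + k)%nat = v -> eval m (e_var k) = Some v.
Proof. intros H. eapply eval_load; [apply eval_slot | exact H]. Qed.

Lemma eval_arrQ : eval m e_arrQ = Some (VN aQ).
Proof. apply eval_slot. Qed.

Lemma eval_arrLabel : eval m e_arrLabel = Some (VN aLabel).
Proof. unfold e_arrLabel, e_arrQ, e_work, e_add, e_n. simpl. now rewrite m_n. Qed.

Lemma eval_arrPred : eval m e_arrPred = Some (VN aPred).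
Proof. unfold e_arrPred, e_arrLabel, e_arrQ, e_work, e_add, e_n. simpl. now rewrite m_n. Qed.

Lemma eval_arrDeque : eval m e_arrDeque = Some (VN aDeque).
Proof.
  unfold e_arrDeque, e_arrPred, e_arrLabel, e_arrQ, e_work, e_add, e_n. simpl. now rewrite m_n.
Qed.

End Layout.

Lemma eval_input m r e i :
  eval m e = Some (VN i) -> eval m (e_input r e) = Some (VN (i + i + i + i + r)).
Proof. intros H. unfold e_input, e_add. simpl. now rewrite H. Qed.

Definition input_intact (m : mem) : Prop := forall a, (a < W)%nat -> m a = input a.

Lemma input_field i r : (1 <= i <= n)%nat -> (r < 4)%nat ->
  input (i + i + i + i + r)%nat =
  match r with
  | 0%nat => VR (q i) | 1%nat => VR (d0 i) | 2%nat => VR (dback i)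
  | _ => if Nat.ltb i n then VR (dnext i) else VN 0
  end.
Proof.
  intros Hi Hr. unfold input_mem.
  replace (i + i + i + i + r)%nat with (r + i * 4)%nat by lia.
  rewrite Nat.div_add, Nat.div_small, Nat.Div0.mod_add, Nat.mod_small by lia.
  rewrite (proj2 (Nat.eqb_neq _ 0)), (proj2 (Nat.eqb_neq _ 1)) by lia.
  rewrite (proj2 (Nat.leb_le 1 (0 + i))), (proj2 (Nat.leb_le (0 + i) n)) by lia.
  reflexivity.
Qed.

Lemma input_beyond a : (W <= a)%nat -> input a = VN 0.
Proof.
  intros Ha. unfold input_mem.
  rewrite (proj2 (Nat.eqb_neq a 0)), (proj2 (Nat.eqb_neq a 1)) by lia.
  assert (n + 1 <= a / 4)%nat.
  { replace (n + 1)%nat with ((4 * (n + 1)) / 4)%nat by (rewrite Nat.mul_comm, Nat.div_mul; lia).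
    apply Nat.Div0.div_le_mono. lia. }
  rewrite (proj2 (Nat.leb_gt (a / 4) n)) by lia. now rewrite Bool.andb_false_r.
Qed.

Section Intact.
Variable m : mem.
Hypothesis intact : input_intact m.

Lemma intact_n : m 0%nat = VN n.
Proof. now rewrite intact by lia. Qed.
Lemma intact_Qcap : m 1%nat = VR Qcap.
Proof. now rewrite intact by lia. Qed.
Lemma intact_q i : (1 <= i <= n)%nat -> m (i + i + i + i + 0)%nat = VR (q i).
Proof. intros Hi. rewrite intact by lia. apply (input_field i 0); lia. Qed.
Lemma intact_d0 i : (1 <= i <= n)%nat -> m (i + i + i + i + 1)%nat = VR (d0 i).
Proof. intros Hi. rewrite intact by lia. apply (input_field i 1); lia. Qed.
Lemma intact_dback i : (1 <= i <= n)%nat -> m (i + i + i + i + 2)%nat = VR (dback i).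
Proof. intros Hi. rewrite intact by lia. apply (input_field i 2); lia. Qed.
Lemma intact_dnext i : (1 <= i < n)%nat -> m (i + i + i + i + 3)%nat = VR (dnext i).
Proof.
  intros Hi. rewrite intact, (input_field i 3) by lia.
  now rewrite (proj2 (Nat.ltb_lt i n)) by lia.
Qed.

End Intact.

Definition chosen (m : mem) (j h' p : nat) (c : R) : mem :=
  upd (upd (upd (upd (upd m (W + v_Qj) (VR (Qcum q j))) (aQ + j) (VR (Qcum q j)))
                (W + v_head) (VN h'))
          (W + v_P) (VR c))
      (aPred + j) (VN p).

Definition pushed (m : mem) (j h' tl' s : nat) (v : R) : mem :=
  upd (upd (upd (upd (upd (upd (upd m (W + v_Dj) (VR (Dcum dnext (j + 1)))) (aLabel + j) (VR v))
                          (W + v_scan) (VN h'))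
                     (W + v_tail) (VN tl'))
                (W + v_scan) (VN s))
           (aDeque + tl') (VN j))
      (W + v_tail) (VN (tl' + 1)).

(* [mem_tac] reads a cell through a chain of [upd]s, separating addresses with [lia],
   and finds its value among the input fields or the hypotheses. *)
Ltac mem_base :=
  first [ reflexivity | eassumption
        | (eapply intact_n; eassumption)
        | (eapply intact_Qcap; eassumption)
        | (eapply intact_q; [eassumption | lia])
        | (eapply intact_d0; [eassumption | lia])
        | (eapply intact_dback; [eassumption | lia])
        | (eapply intact_dnext; [eassumption | lia])
        | match goal with H : forall _, _ |- _ => solve [eapply H; lia] end ].
Ltac mem_unfold := repeat (match goal with x := _ : mem |- _ => subst x end); unfold chosen, pushed;
  repeat (first [rewrite upd_eq by lia | rewrite upd_neq by lia]).
Ltac mem_tac := mem_unfold; mem_base.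

Ltac eval_tac :=
  lazymatch goal with
  | |- eval _ (ENat _) = _ => reflexivity
  | |- eval _ (EReal _) = _ => reflexivity
  | |- eval _ e_n = _ => apply eval_n
  | |- eval _ (e_slot _) = _ => apply eval_slot
  | |- eval _ (e_var _) = _ => eapply eval_var
  | |- eval _ (e_add e_arrQ _) = _ => eapply eval_addN; [apply eval_arrQ | eval_tac | ]
  | |- eval _ (e_add e_arrLabel _) = _ => eapply eval_addN; [apply eval_arrLabel | eval_tac | ]
  | |- eval _ (e_add e_arrPred _) = _ => eapply eval_addN; [apply eval_arrPred | eval_tac | ]
  | |- eval _ (e_add e_arrDeque _) = _ => eapply eval_addN; [apply eval_arrDeque | eval_tac | ]
  | |- eval _ (e_input _ _) = _ => eapply eval_input; eval_tac
  | |- eval _ (e_at _ _) = _ => eapply eval_load; [eval_tac | ]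
  | |- eval _ (e_field _ _) = _ => eapply eval_load; [eval_tac | ]
  | |- eval _ (ELoad _) = _ => eapply eval_load; [eval_tac | ]
  | |- eval _ (e_add _ _) = _ => eapply eval_addN; [eval_tac | eval_tac | ]
  | |- eval _ (EBin OAdd _ _) = Some (VR _) => eapply eval_addR; [eval_tac | eval_tac | ]
  | |- eval _ (EBin OSub _ _) = Some (VR _) => eapply eval_subR; [eval_tac | eval_tac | ]
  | |- eval _ (EBin OSub _ _) = Some (VN _) => eapply eval_subN; [eval_tac | eval_tac | ]
  end.

Section DropFront.
Variables (tl : nat) (D : nat -> nat) (Qj : R).

Lemma drop_front_test m h :
  m 0%nat = VN n -> m 1%nat = VR Qcap -> m (W + v_Qj)%nat = VR Qj -> m (W + v_head)%nat = VN h ->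
  m (aDeque + h)%nat = VN (D h) -> m (aQ + D h)%nat = VR (Qcum q (D h)) ->
  eval m (EBin OLt (ELoad (ENat 1))
            (EBin OSub (e_var v_Qj) (e_at e_arrQ (e_at e_arrDeque (e_var v_head)))))
  = Some (b2v (if Rlt_dec Qcap (Qj - Qcum q (D h)) then true else false)).
Proof. intros. eapply eval_ltR; eval_tac; mem_tac. Qed.

Lemma drop_front_exit m h :
  m 0%nat = VN n -> m 1%nat = VR Qcap -> m (W + v_Qj)%nat = VR Qj -> m (W + v_head)%nat = VN h ->
  m (aDeque + h)%nat = VN (D h) -> m (aQ + D h)%nat = VR (Qcum q (D h)) ->
  Qj - Qcum q (D h) <= Qcap -> exec drop_front m 1 m.
Proof.
  intros. apply ExWhileF. erewrite drop_front_test by eauto.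
  destruct (Rlt_dec Qcap (Qj - Qcum q (D h))); [lra | reflexivity].
Qed.

(* [k] bounds the number of entries dropped: the entry at [h + k] is feasible. *)
Lemma drop_front_spec k : forall m h,
  m 0%nat = VN n -> m 1%nat = VR Qcap -> m (W + v_Qj)%nat = VR Qj -> m (W + v_head)%nat = VN h ->
  (forall x, (h <= x < tl)%nat -> m (aDeque + x)%nat = VN (D x)) ->
  (forall x, (h <= x < tl)%nat -> m (aQ + D x)%nat = VR (Qcum q (D x))) ->
  (h + k < tl)%nat -> Qj - Qcum q (D (h + k)%nat) <= Qcap ->
  exists h', front_scan Qj h h' tl D /\
    exec drop_front m (2 * (h' - h) + 1) (upd m (W + v_head) (VN h')).
Proof.
  induction k as [|k IH]; intros m h M0 M1 MQ MH MD MQarr Hk Hstop.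
  - rewrite Nat.add_0_r in Hstop. exists h. split.
    + repeat split; auto; lia.
    + rewrite Nat.sub_diag, <- MH, upd_same.
      apply drop_front_exit with h; auto; [apply MD | apply MQarr]; lia.
  - destruct (Rlt_dec Qcap (Qj - Qcum q (D h))) as [Hdrop|Hkeep].
    + set (m1 := upd m (W + v_head)%nat (VN (h + 1))).
      destruct (IH m1 (h + 1)%nat) as [h' [[Hh' [Hbefore Hat]] Hexec]];
        try (unfold m1; intros; mem_tac); try lia.
      { now replace (h + 1 + k)%nat with (h + S k)%nat by lia. }
      exists h'. split.
      * repeat split; auto; try lia. intros x Hx.
        destruct (Nat.eq_dec x h) as [->|]; [exact Hdrop | apply Hbefore; lia].
      * replace (2 * (h' - h) + 1)%nat with (S (1 + (2 * (h' - (h + 1)) + 1)))%nat by lia.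
        eapply ExWhileT.
        { erewrite drop_front_test; eauto; [|apply MD; lia | apply MQarr; lia].
          destruct (Rlt_dec Qcap (Qj - Qcum q (D h))); [reflexivity | lra]. }
        { apply ExStore; eval_tac; mem_tac. }
        unfold m1 in Hexec. now rewrite upd_shadow in Hexec.
    + exists h. split.
      * repeat split; try lia; lra.
      * rewrite Nat.sub_diag, <- MH, upd_same.
        apply drop_front_exit with h; auto; [apply MD | apply MQarr | ]; try lia; lra.
Qed.

End DropFront.

Lemma pop_back_spec k : forall m tl (D : nat -> nat) (w : nat -> R) j h v,
  m 0%nat = VN n -> m (W + v_j)%nat = VN j -> m (W + v_scan)%nat = VN h ->
  m (W + v_tail)%nat = VN tl -> tl = (h + k)%nat -> m (aLabel + j)%nat = VR v ->
  (forall x, (h <= x < tl)%nat -> m (aDeque + x)%nat = VN (D x)) ->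
  (forall x, (h <= x < tl)%nat -> m (aLabel + D x)%nat = VR (w (D x))) ->
  exists tl' s t, back_scan w v h tl tl' D /\
    exec pop_back m t (upd (upd m (W + v_tail) (VN tl')) (W + v_scan) (VN s)) /\
    (t <= 3 * (tl - tl') + 4)%nat.
Proof.
  induction k as [|k IH]; intros m tl D w j h v M0 MJ MS MT Htl MV MD MW.
  - exists tl, h, 1%nat. split; [repeat split; intros; lia|]. split; [|lia].
    rewrite <- MS, <- MT, !upd_same. apply ExWhileF.
    erewrite eval_ltN; [| eval_tac; mem_tac | eval_tac; mem_tac].
    now rewrite (proj2 (Nat.ltb_ge h tl)) by lia.
  - assert (Htest : eval m (EBin OLe (e_at e_arrLabel (e_var v_j))
                   (e_at e_arrLabel (e_at e_arrDeque (EBin OSub (e_var v_tail) (ENat 1)))))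
                 = Some (b2v (if Rle_dec v (w (D (tl - 1)%nat)) then true else false))).
    { eapply eval_leR; eval_tac; mem_tac. }
    assert (Hloop : eval m (EBin OLt (e_var v_scan) (e_var v_tail)) = Some (VN 1)).
    { erewrite eval_ltN; [| eval_tac; mem_tac | eval_tac; mem_tac].
      now rewrite (proj2 (Nat.ltb_lt h tl)) by lia. }
    destruct (Rle_dec v (w (D (tl - 1)%nat))) as [Hevict|Hkeep].
    + set (m1 := upd m (W + v_tail)%nat (VN (tl - 1))).
      destruct (IH m1 (tl - 1)%nat D w j h v) as [tl' [s [t [[Htl' [Hge Hlt]] [Hexec Ht]]]]];
        try (unfold m1; intros; mem_tac); try lia.
      exists tl', s, (S (S 1 + t)). split; [|split].
      * repeat split; auto; try lia. intros x Hx.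
        destruct (Nat.eq_dec x (tl - 1)) as [->|]; [exact Hevict | apply Hge; lia].
      * eapply ExWhileT with (m1 := m1); [exact Hloop | |].
        { apply ExIfT with (k := 0%nat); [exact Htest|].
          unfold m1. apply ExStore; eval_tac; mem_tac. }
        unfold m1 in Hexec. now rewrite upd_shadow in Hexec.
      * lia.
    + exists tl, tl, (S (S 1 + 1)). split; [|split].
      * repeat split; try lia; try (intros; lia). intros _. lra.
      * rewrite <- MT at 1. rewrite upd_same.
        eapply ExWhileT with (m1 := upd m (W + v_scan)%nat (VN tl)); [exact Hloop | |].
        { apply ExIfF; [exact Htest|]. apply ExStore; eval_tac; mem_tac. }
        apply ExWhileF. erewrite eval_ltN; [| eval_tac; mem_tac | eval_tac; mem_tac].
        now rewrite Nat.ltb_irrefl.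
      * lia.
Qed.

Record stores (j h tl : nat) (D pr : nat -> nat) (pp : nat -> R) (m : mem) : Prop := {
  mem_intact : input_intact m;
  mem_j : m (W + v_j)%nat = VN j;
  mem_head : m (W + v_head)%nat = VN h;
  mem_tail : m (W + v_tail)%nat = VN tl;
  mem_deque : forall x, (h <= x < tl)%nat -> m (aDeque + x)%nat = VN (D x);
  mem_Dj : (j <= n)%nat -> m (W + v_Dj)%nat = VR (Dcum dnext j);
  mem_Qj : m (W + v_Qj)%nat = VR (Qcum q (j - 1));
  mem_P : (2 <= j)%nat -> m (W + v_P)%nat = VR (pp (j - 1)%nat);
  mem_arrQ : forall i, (i < j)%nat -> m (aQ + i)%nat = VR (Qcum q i);
  mem_arrLabel : forall i, (i < j)%nat -> (i < n)%nat -> m (aLabel + i)%nat = VR (label pp i);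
  mem_arrPred : forall i, (i < j)%nat -> m (aPred + i)%nat = VN (pr i) }.

Lemma choose_pred_exec j h tl D pr pp m :
  split_state j h tl D pr pp -> stores j h tl D pr pp m -> (j <= n)%nat ->
  exists h', front_scan (Qcum q j) h h' tl D /\
    exec choose_pred m (2 * (h' - h) + 5)
      (chosen m j h' (D h') (pp (D h') + arc_cost d0 dback dnext (D h') j)).
Proof.
  intros S [F MJ MH MT MD MDj MQ MP MQarr ML MPred] Hjn.
  pose proof (st_j _ _ _ _ _ _ _ _ _ _ _ _ S) as Hj.
  pose proof (st_deque_lt _ _ _ _ _ _ _ _ _ _ _ _ S) as HDj.
  assert (M0 : m 0%nat = VN n) by (apply intact_n; auto).
  destruct (split_state_last_in_deque _ _ _ _ _ _ q_bounds _ _ _ _ _ _ S Hjn)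
    as [x0 [Hx0 HDx0]].
  set (m1 := upd m (W + v_Qj)%nat (VR (Qcum q j))).
  set (m2 := upd m1 (aQ + j)%nat (VR (Qcum q j))).
  destruct (drop_front_spec tl D (Qcum q j) (x0 - h) m2 h) as [h' [Hscan Hexec]];
    try (unfold m2, m1; intros; mem_tac); try lia.
  { intros x Hx. pose proof (HDj x Hx). mem_tac. }
  { replace (h + (x0 - h))%nat with x0 by lia. rewrite HDx0, <- (Qcum_pred q j) by lia.
    pose proof (q_bounds j ltac:(lia)). lra. }
  exists h'. split; [exact Hscan|]. unfold chosen.
  destruct Hscan as [Hh' _]. pose proof (HDj h' ltac:(lia)).
  replace (2 * (h' - h) + 5)%nat with (1 + (1 + (2 * (h' - h) + 1 + (1 + 1))))%nat by lia.
  apply ExSeq with (m1 := m1).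
  { apply ExStore; eval_tac; try mem_tac. apply Qcum_pred; lia. }
  apply ExSeq with (m1 := m2); [apply ExStore; eval_tac; mem_tac|].
  eapply ExSeq; [exact Hexec|].
  eapply ExSeq; apply ExStore; eval_tac; try mem_tac.
  rewrite (arc_cost_label d0 dback dnext). reflexivity.
Qed.

Section Advance.
Variables (j h tl h' : nat) (D pr : nat -> nat) (pp : nat -> R) (m : mem).
Hypothesis state : split_state j h tl D pr pp.
Hypothesis M : stores j h tl D pr pp m.
Hypothesis scan : front_scan (Qcum q j) h h' tl D.

Let p := D h'.
Let c := pp p + arc_cost d0 dback dnext p j.
Let pp' := set_at pp j c.
Let pr' := set_at pr j p.

Lemma push_j_exec :
  (j < n)%nat ->
  exists tl' s t, back_scan (label pp) (label pp' j) h' tl tl' D /\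
    exec push_j (chosen m j h' p c) t (pushed (chosen m j h' p c) j h' tl' s (label pp' j)) /\
    (t + 3 * tl' <= 3 * tl + 9)%nat.
Proof.
  intros Hjn. destruct M as [F MJ MH MT MD MDj MQ MP MQarr ML MPred].
  pose proof (st_j _ _ _ _ _ _ _ _ _ _ _ _ state) as Hj.
  pose proof (st_deque_lt _ _ _ _ _ _ _ _ _ _ _ _ state) as HDj.
  destruct scan as [Hh' _].
  assert (M0 : m 0%nat = VN n) by (apply intact_n; auto).
  set (mc := chosen m j h' p c).
  set (m6 := upd mc (W + v_Dj)%nat (VR (Dcum dnext (j + 1)))).
  set (m7 := upd m6 (aLabel + j)%nat (VR (label pp' j))).
  set (m8 := upd m7 (W + v_scan)%nat (VN h')).
  destruct (pop_back_spec (tl - h') m8 tl D (label pp) j h' (label pp' j))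
    as [tl' [s [tb [Hback [Hpop Htb]]]]];
    try (intros; mem_tac); try lia.
  { intros x Hx. pose proof (HDj x ltac:(lia)). mem_unfold. apply ML; lia. }
  set (m9 := upd (upd m8 (W + v_tail)%nat (VN tl')) (W + v_scan)%nat (VN s)).
  set (m10 := upd m9 (aDeque + tl')%nat (VN j)).
  exists tl', s, (1 + (1 + (1 + (tb + (1 + 1)))))%nat.
  split; [exact Hback|]. split; [|destruct Hback; lia].
  apply ExSeq with (m1 := m6).
  { apply ExStore; eval_tac; try mem_tac. apply Dcum_succ; lia. }
  apply ExSeq with (m1 := m7).
  { apply ExStore; eval_tac; try mem_tac. unfold pp', label. now rewrite set_at_eq. }
  apply ExSeq with (m1 := m8); [apply ExStore; eval_tac; mem_tac|].
  apply ExSeq with (m1 := m9); [exact Hpop|].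
  apply ExSeq with (m1 := m10); apply ExStore; eval_tac; mem_tac.
Qed.

Lemma stores_pushed tl' s :
  (j < n)%nat -> (h' <= tl' <= tl)%nat ->
  stores (j + 1) h' (tl' + 1) (set_at D tl' j) pr' pp'
    (upd (pushed (chosen m j h' p c) j h' tl' s (label pp' j)) (W + v_j) (VN (j + 1))).
Proof.
  intros Hjn Htl'. destruct M as [F MJ MH MT MD MDj MQ MP MQarr ML MPred].
  pose proof (st_j _ _ _ _ _ _ _ _ _ _ _ _ state) as Hj.
  destruct scan as [Hh' _].
  split.
  - intros a Ha. mem_unfold. apply F; lia.
  - mem_tac.
  - mem_tac.
  - mem_tac.
  - intros x Hx. unfold set_at.
    destruct (Nat.eqb_spec x tl'); [subst; mem_tac | mem_unfold; apply MD; lia].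
  - intros _. mem_tac.
  - replace (j + 1 - 1)%nat with j by lia. mem_tac.
  - intros _. replace (j + 1 - 1)%nat with j by lia. unfold pp'. rewrite set_at_eq. mem_tac.
  - intros i Hi. destruct (Nat.eq_dec i j); [subst; mem_tac | mem_unfold; apply MQarr; lia].
  - intros i Hi Hin. destruct (Nat.eq_dec i j); [subst; mem_tac|].
    unfold pp'. rewrite (label_set_at d0 dnext pp j c i) by lia. mem_unfold. apply ML; lia.
  - intros i Hi. unfold pr', set_at. destruct (Nat.eqb_spec i j); [subst; mem_tac|].
    mem_unfold. apply MPred; lia.
Qed.

Lemma advance_push_exec :
  (j < n)%nat ->
  exists tl' t m', back_scan (label pp) (label pp' j) h' tl tl' D /\
    exec advance (chosen m j h' p c) t m' /\
    stores (j + 1) h' (tl' + 1) (set_at D tl' j) pr' pp' m' /\ (t + 3 * tl' <= 3 * tl + 11)%nat.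
Proof.
  intros Hjn. destruct (push_j_exec Hjn) as [tl' [s [t [Hback [Hpush Ht]]]]].
  pose proof (intact_n m (mem_intact _ _ _ _ _ _ _ M)) as M0.
  pose proof (mem_j _ _ _ _ _ _ _ M) as MJ.
  set (mp := pushed (chosen m j h' p c) j h' tl' s (label pp' j)).
  exists tl', (S t + 1)%nat, (upd mp (W + v_j)%nat (VN (j + 1))).
  split; [exact Hback|]. split; [|split; [apply stores_pushed; destruct Hback; lia | lia]].
  apply ExSeq with (m1 := mp).
  - apply ExIfT with (k := 0%nat); [|exact Hpush].
    erewrite eval_ltN; [| eval_tac; mem_tac | eval_tac; mem_tac].
    now rewrite (proj2 (Nat.ltb_lt j n)).
  - apply ExStore; eval_tac; mem_tac.
Qed.

Lemma advance_finish_exec :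
  j = n -> exists m', exec advance (chosen m j h' p c) 2 m' /\
    stores (j + 1) h' tl D pr' pp' m'.
Proof.
  intros Hjn. destruct M as [F MJ MH MT MD MDj MQ MP MQarr ML MPred].
  pose proof (st_j _ _ _ _ _ _ _ _ _ _ _ _ state) as Hj.
  pose proof (st_deque_lt _ _ _ _ _ _ _ _ _ _ _ _ state) as HDj.
  destruct scan as [Hh' _].
  assert (M0 : m 0%nat = VN n) by (apply intact_n; auto).
  set (mc := chosen m j h' p c).
  exists (upd mc (W + v_j)%nat (VN (j + 1))). split.
  - apply ExSeq with (m1 := mc) (t1 := 1%nat) (t2 := 1%nat).
    + apply ExIfF; [|apply ExSkip].
      erewrite eval_ltN; [| eval_tac; mem_tac | eval_tac; mem_tac].
      rewrite Hjn. now rewrite Nat.ltb_irrefl.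
    + apply ExStore; eval_tac; mem_tac.
  - split.
    + intros a Ha. mem_unfold. apply F; lia.
    + mem_tac.
    + mem_tac.
    + mem_unfold. exact MT.
    + intros x Hx. pose proof (HDj x ltac:(lia)). mem_unfold. apply MD; lia.
    + intros. lia.
    + replace (j + 1 - 1)%nat with j by lia. mem_tac.
    + intros _. replace (j + 1 - 1)%nat with j by lia. unfold pp'. rewrite set_at_eq. mem_tac.
    + intros i Hi. destruct (Nat.eq_dec i j); [subst; mem_tac | mem_unfold; apply MQarr; lia].
    + intros i Hi Hin. unfold pp'. rewrite label_set_at by lia. mem_unfold. apply ML; lia.
    + intros i Hi. unfold pr', set_at. destruct (Nat.eqb_spec i j); [subst; mem_tac|].
      mem_unfold. apply MPred; lia.
Qed.

End Advance.

Lemma split_body_exec j h tl D pr pp m :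
  split_state j h tl D pr pp -> stores j h tl D pr pp m -> (j <= n)%nat ->
  exists t h' tl' D' pr' pp' m', exec split_body m t m' /\
    split_state (j + 1) h' tl' D' pr' pp' /\ stores (j + 1) h' tl' D' pr' pp' m' /\
    (t + 3 * (tl' - h') <= 19 + 3 * (tl - h))%nat.
Proof.
  intros state M Hjn.
  destruct (choose_pred_exec j h tl D pr pp m state M Hjn) as [h' [Hscan Hchoose]].
  pose proof Hscan as [Hh' _].
  destruct (Nat.lt_ge_cases j n) as [Hlt|Hge].
  - destruct (advance_push_exec j h tl h' D pr pp m state M Hscan Hlt)
      as [tl' [t [m' [Hback [Hadv [M' Ht]]]]]].
    pose proof Hback as [Htl' _].
    eexists _, h', (tl' + 1)%nat, _, _, _, m'. split; [|split; [|split]].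
    + apply ExSeq with (m1 := chosen m j h' (D h') (pp (D h') + arc_cost d0 dback dnext (D h') j));
        eassumption.
    + exact (split_state_push _ _ _ _ _ _ q_bounds _ _ _ _ _ _ _ state Hjn Hscan tl' Hlt Hback).
    + exact M'.
    + lia.
  - destruct (advance_finish_exec j h tl h' D pr pp m state M Hscan ltac:(lia)) as [m' [Hadv M']].
    eexists _, h', tl, D, _, _, m'. split; [|split; [|split]].
    + apply ExSeq with (m1 := chosen m j h' (D h') (pp (D h') + arc_cost d0 dback dnext (D h') j));
        eassumption.
    + exact (split_state_finish _ _ _ _ _ _ q_bounds _ _ _ _ _ _ _ state Hjn Hscan ltac:(lia)).
    + exact M'.
    + lia.
Qed.

(* The potential [3 (tl - h)] pays for the deque entries that will be dropped later. *)
Lemma split_loop_exec k : forall j h tl D pr pp m,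
  split_state j h tl D pr pp -> stores j h tl D pr pp m -> (n + 1 - j = k)%nat ->
  exists t h' tl' D' pr' pp' m', exec split_loop m t m' /\
    split_state (n + 1) h' tl' D' pr' pp' /\ stores (n + 1) h' tl' D' pr' pp' m' /\
    (t <= 20 * (n + 1 - j) + 3 * (tl - h) + 1)%nat.
Proof.
  induction k as [|k IH]; intros j h tl D pr pp m state M Hk;
    pose proof (st_j _ _ _ _ _ _ _ _ _ _ _ _ state) as Hj;
    pose proof (mem_j _ _ _ _ _ _ _ M) as MJ;
    assert (M0 : m 0%nat = VN n) by (apply intact_n, M).
  - assert (j = n + 1)%nat as -> by lia.
    exists 1%nat, h, tl, D, pr, pp, m. split; [|split; [|split]]; auto; [|lia].
    apply ExWhileF.
    erewrite eval_ltN; [| eval_tac; mem_tac | eval_tac; mem_tac].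
    now rewrite Nat.ltb_irrefl.
  - destruct (split_body_exec j h tl D pr pp m state M ltac:(lia))
      as (t1 & h1 & tl1 & D1 & pr1 & pp1 & m1 & E1 & state1 & M1 & T1).
    destruct (IH (j + 1)%nat h1 tl1 D1 pr1 pp1 m1 state1 M1 ltac:(lia))
      as (t2 & h2 & tl2 & D2 & pr2 & pp2 & m2 & E2 & state2 & M2 & T2).
    exists (S (t1 + t2)), h2, tl2, D2, pr2, pp2, m2. split; [|split; [|split]]; auto; [|lia].
    eapply ExWhileT; eauto.
    erewrite eval_ltN; [| eval_tac; mem_tac | eval_tac; mem_tac].
    now rewrite (proj2 (Nat.ltb_lt j (n + 1))) by lia.
Qed.

Lemma split_init_exec : exists m, exec split_init input 6 m /\
  stores 1 0 1 (fun _ => 0%nat) (fun _ => 0%nat) (fun _ => 0) m.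
Proof.
  assert (F : input_intact input) by (intros a _; reflexivity).
  assert (M0 : input 0%nat = VN n) by reflexivity.
  set (m1 := upd input (W + v_j)%nat (VN 1)).
  set (m2 := upd m1 (W + v_tail)%nat (VN 1)).
  set (m3 := upd m2 (W + v_Dj)%nat (VR 0)).
  set (m4 := upd m3 (W + v_Qj)%nat (VR 0)).
  set (m5 := upd m4 (aQ + 0)%nat (VR 0)).
  set (m6 := upd m5 (aLabel + 0)%nat (VR (d0 1%nat))).
  exists m6. split.
  - change 6%nat with (1 + (1 + (1 + (1 + (1 + 1)))))%nat.
    apply ExSeq with (m1 := m1); [apply ExStore; eval_tac; mem_tac|].
    apply ExSeq with (m1 := m2); [apply ExStore; eval_tac; mem_tac|].
    apply ExSeq with (m1 := m3); [apply ExStore; eval_tac; mem_tac|].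
    apply ExSeq with (m1 := m4); [apply ExStore; eval_tac; mem_tac|].
    apply ExSeq with (m1 := m5); [apply ExStore; eval_tac; mem_tac|].
    apply ExStore; eval_tac; mem_tac.
  - split; try (intros; lia).
    + intros a Ha. mem_unfold. reflexivity.
    + mem_tac.
    + mem_unfold. apply input_beyond. lia.
    + mem_tac.
    + intros x Hx. replace x with 0%nat by lia. mem_unfold. apply input_beyond. lia.
    + intros _. mem_tac.
    + mem_tac.
    + intros i Hi. replace i with 0%nat by lia. mem_tac.
    + intros i Hi _. replace i with 0%nat by lia. mem_unfold.
      unfold label, Dcum. simpl. f_equal. lra.
    + intros i Hi. replace i with 0%nat by lia. mem_unfold. apply input_beyond. lia.
Qed.

Section Reconstruct.
Variable pr : nat -> nat.
Hypothesis pr_lt : forall i, (1 <= i <= n)%nat -> (pr i < i)%nat.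
Local Notation chain := (pred_chain n pr).

Lemma count_chain_spec x : (x <= n)%nat -> forall m k,
  m 0%nat = VN n -> m (W + v_walk)%nat = VN x -> m (W + v_len)%nat = VN k ->
  (forall i, (i <= n)%nat -> m (aPred + i)%nat = VN (pr i)) ->
  exists t, exec count_chain m t
      (upd (upd m (W + v_walk) (VN 0)) (W + v_len) (VN (k + length (chain x) - 1))) /\
    (t <= 3 * length (chain x))%nat.
Proof.
  induction x as [x IH] using (well_founded_induction lt_wf).
  intros Hx m k M0 MW ML MPred.
  destruct (Nat.eq_dec x 0) as [->|Hx0].
  - rewrite pred_chain_0 by auto. exists 1%nat. split; [|simpl; lia].
    replace (k + length (0%nat :: nil) - 1)%nat with k by (simpl; lia).
    rewrite <- MW, <- ML, !upd_same. apply ExWhileF.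
    erewrite eval_ltN; [| eval_tac | eval_tac; mem_tac]. reflexivity.
  - pose proof (pr_lt x ltac:(lia)) as Hpx.
    set (m1 := upd (upd m (W + v_walk)%nat (VN (pr x))) (W + v_len)%nat (VN (k + 1))).
    destruct (IH (pr x) Hpx ltac:(lia) m1 (k + 1)%nat) as [t [Hexec Ht]]; try (intros; mem_tac).
    rewrite pred_chain_step, length_app by (auto; lia). simpl.
    exists (S (1 + 1 + t)). split; [|lia].
    eapply ExWhileT with (m1 := m1).
    + erewrite eval_ltN; [| eval_tac | eval_tac; mem_tac].
      now rewrite (proj2 (Nat.ltb_lt 0 x)) by lia.
    + apply ExSeq with (m1 := upd m (W + v_walk)%nat (VN (pr x)));
        apply ExStore; eval_tac; mem_tac.
    + unfold m1 in Hexec. rewrite upd_shadow2 in Hexec by lia.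
      replace (k + (length (chain (pr x)) + 1) - 1)%nat
        with (k + 1 + length (chain (pr x)) - 1)%nat by lia.
      exact Hexec.
Qed.

Lemma write_chain_iter m x pos t m' :
  m 0%nat = VN n -> m (W + v_walk)%nat = VN x -> m (W + v_pos)%nat = VN pos ->
  (2 <= pos <= n + 2)%nat -> m (aPred + x)%nat = VN (pr x) ->
  exec write_chain
    (upd (upd (upd m pos (VN x)) (W + v_walk) (VN (pr x))) (W + v_pos) (VN (pos - 1))) t m' ->
  exec write_chain m (S (1 + (1 + 1) + t)) m'.
Proof.
  intros M0 MW MP Hpos MPx Hrest.
  eapply ExWhileT; [| | exact Hrest].
  - erewrite eval_ltN; [| eval_tac | eval_tac; mem_tac].
    now rewrite (proj2 (Nat.ltb_lt 1 pos)) by lia.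
  - apply ExSeq with (m1 := upd m pos (VN x)); [apply ExStore; eval_tac; mem_tac|].
    apply ExSeq with (m1 := upd (upd m pos (VN x)) (W + v_walk)%nat (VN (pr x)));
      apply ExStore; eval_tac; try mem_tac.
Qed.

Lemma write_chain_spec x : (x <= n)%nat -> forall m pos,
  m 0%nat = VN n -> m (W + v_walk)%nat = VN x -> m (W + v_pos)%nat = VN pos ->
  pos = (length (chain x) + 1)%nat ->
  (forall i, (i <= n)%nat -> m (aPred + i)%nat = VN (pr i)) ->
  exists t m', exec write_chain m t m' /\ (t <= 4 * pos)%nat /\
    (forall s, (2 <= s <= pos)%nat -> m' s = VN (nth (s - 2) (chain x) 0%nat)) /\
    (forall a, (a < 2 \/ pos < a)%nat -> a <> (W + v_walk)%nat -> a <> (W + v_pos)%nat ->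
       m' a = m a).
Proof.
  induction x as [x IH] using (well_founded_induction lt_wf).
  intros Hx m pos M0 MW MP Hpos MPred.
  assert (Hposn : (pos <= n + 2)%nat)
    by (pose proof (pred_chain_length n pr pr_lt x n_pos Hx); lia).
  set (m3 := upd (upd (upd m pos (VN x)) (W + v_walk)%nat (VN (pr x))) (W + v_pos)%nat
               (VN (pos - 1))).
  destruct (Nat.eq_dec x 0) as [->|Hx0].
  - rewrite pred_chain_0 in Hpos |- * by auto. simpl in Hpos. subst pos.
    exists (S (1 + (1 + 1) + 1)), m3. split; [|split; [lia|split]].
    + apply (write_chain_iter m 0 2); auto; try lia. apply ExWhileF.
      erewrite eval_ltN; [| eval_tac | eval_tac; mem_tac]. reflexivity.
    + intros s Hs. replace s with 2%nat by lia. simpl. mem_tac.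
    + intros a Ha Hw Hp. mem_tac.
  - pose proof (pr_lt x ltac:(lia)) as Hpx.
    rewrite pred_chain_step, length_app in Hpos by (auto; lia). simpl in Hpos.
    destruct (IH (pr x) Hpx ltac:(lia) m3 (pos - 1)%nat) as [t [m' [Hexec [Ht [Hout Hrest]]]]];
      try (intros; mem_tac); try lia.
    exists (S (1 + (1 + 1) + t)), m'. split; [|split; [lia|split]].
    + apply (write_chain_iter m x pos); auto; lia.
    + intros s Hs. rewrite pred_chain_step by (auto; lia).
      destruct (Nat.eq_dec s pos) as [->|].
      * rewrite Hrest, app_nth2 by lia.
        replace (pos - 2 - length (chain (pr x)))%nat with 0%nat by lia. simpl. mem_tac.
      * rewrite Hout, app_nth1 by lia. reflexivity.
    + intros a Ha Hw Hp. rewrite Hrest by lia. mem_tac.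
Qed.

End Reconstruct.

Lemma reconstruct_exec h tl D pr pp m :
  split_state (n + 1) h tl D pr pp -> stores (n + 1) h tl D pr pp m ->
  let path := pred_chain n pr n in
  exists t m', exec reconstruct m t m' /\ (t <= 7 * n + 17)%nat /\
    m' 0%nat = VR (pp n) /\ m' 1%nat = VN (length path) /\
    read_nats m' 2 (length path) = Some path.
Proof.
  intros state M path.
  destruct M as [F MJ MH MT MD MDj MQ MP MQarr ML MPred].
  assert (M0 : m 0%nat = VN n) by (apply intact_n; auto).
  assert (Hpr : forall i, (1 <= i <= n)%nat -> (pr i < i)%nat)
    by (intros i Hi; apply (st_pred _ _ _ _ _ _ _ _ _ _ _ _ state); lia).
  assert (MPred' : forall i, (i <= n)%nat -> m (aPred + i)%nat = VN (pr i))
    by (intros i Hi; apply MPred; lia).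
  set (L := length path).
  assert (HL : (L <= n + 1)%nat) by (apply pred_chain_length; auto).
  set (r1 := upd m (W + v_walk)%nat (VN n)).
  set (r2 := upd r1 (W + v_len)%nat (VN 1)).
  destruct (count_chain_spec pr Hpr n (Nat.le_refl n) r2 1) as [t2 [E2 T2]];
    try (intros; mem_tac).
  change (length (pred_chain n pr n)) with L in T2.
  set (r3 := upd (upd r2 (W + v_walk)%nat (VN 0)) (W + v_len)%nat (VN (1 + L - 1))).
  set (r4 := upd r3 (W + v_walk)%nat (VN n)).
  set (r5 := upd r4 (W + v_pos)%nat (VN (L + 1))).
  destruct (write_chain_spec pr Hpr n (Nat.le_refl n) r5 (L + 1)%nat)
    as [t3 [r6 [E3 [T3 [Out Rest]]]]]; try (intros; mem_tac); auto.
  assert (R60 : r6 0%nat = VN n) by (rewrite Rest by lia; mem_tac).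
  assert (R6len : r6 (W + v_len)%nat = VN L) by (rewrite Rest by lia; mem_unfold; f_equal; lia).
  assert (R6P : r6 (W + v_P)%nat = VR (pp n)).
  { rewrite Rest by lia. mem_unfold. rewrite MP by lia. now replace (n + 1 - 1)%nat with n by lia. }
  set (r7 := upd r6 1%nat (VN L)).
  exists (1 + (1 + (t2 + (1 + (1 + (t3 + (1 + 1)))))))%nat, (upd r7 0%nat (VR (pp n))).
  split; [|split; [lia|split; [|split]]].
  - apply ExSeq with (m1 := r1); [apply ExStore; eval_tac; mem_tac|].
    apply ExSeq with (m1 := r2); [apply ExStore; eval_tac; mem_tac|].
    apply ExSeq with (m1 := r3); [exact E2|].
    apply ExSeq with (m1 := r4); [apply ExStore; eval_tac; mem_tac|].
    apply ExSeq with (m1 := r5); [apply ExStore; eval_tac; try mem_tac; lia|].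
    apply ExSeq with (m1 := r6); [exact E3|].
    apply ExSeq with (m1 := r7); apply ExStore; eval_tac; mem_tac.
  - mem_tac.
  - mem_tac.
  - apply read_nats_nth. intros s Hs.
    specialize (Out (2 + s)%nat ltac:(fold L in Hs; lia)).
    replace (2 + s - 2)%nat with s in Out by lia. mem_tac.
Qed.

End Machine.

Theorem mainTheorem2 :
  exists (P : stmt) (C : nat),
    forall (n : nat) (Qcap : R) (q d0 dback dnext : nat -> R),
      (1 <= n)%nat ->
      0 <= Qcap ->
      (forall i, (1 <= i <= n)%nat -> 0 <= q i <= Qcap) ->
      exists (m' : mem) (t : nat) (c : R) (k : nat) (p : list nat),
        exec P (input_mem n Qcap q d0 dback dnext) t m' /\
        (t <= C * n)%nat /\
        m' 0%nat = VR c /\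
        m' 1%nat = VN k /\
        read_nats m' 2 k = Some p /\
        is_min_cost_path n Qcap q d0 dback dnext p c.
Proof.
  exists split_program, 60%nat. intros n Qcap q d0 dback dnext Hn _ Hq.
  destruct (split_init_exec n Qcap q d0 dback dnext Hn) as [m0 [E0 M0]].
  destruct (split_loop_exec n Qcap q d0 dback dnext Hn Hq n 1 0 1 _ _ _ m0
              (split_state_init n Qcap q d0 dback dnext Hn) M0 ltac:(lia))
    as (t1 & h & tl & D & pr & pp & m1 & E1 & state & M1 & T1).
  destruct (reconstruct_exec n Qcap q d0 dback dnext Hn h tl D pr pp m1 state M1)
    as (t2 & m2 & E2 & T2 & Mcost & Mlen & Mpath).
  exists m2, (6 + (t1 + t2))%nat, (pp n), (length (pred_chain n pr n)), (pred_chain n pr n).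
  split; [|split; [lia|]].
  - apply ExSeq with (m1 := m0); [exact E0|]. eapply ExSeq; eassumption.
  - repeat split; auto. eapply split_state_min_cost_path; eauto.
Qed.
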